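(* Let $A\in\{0,1\}^{n\times n}$ and let $(n_1,n_2)$ be positive integers with $n_1n_2=n$. For each $(i,j)$ with $a_{ij}=1$, write $i-1=\tilde i_1 n_2+\tilde i_2$ and $j-1=\tilde j_1 n_2+\tilde j_2$ with $0\le \tilde i_1,\tilde j_1<n_1$, $0\le \tilde i_2,\tilde j_2<n_2$ (Euclidean division), set $i_k=\tilde i_k+1$, $j_k=\tilde j_k+1$, and define the linear indices $l_1=(j_1-1)n_1+i_1$ and $l_2=(j_2-1)n_2+i_2$. Let $S\subset\mathbb{N}\times\mathbb{N}$ be the set of all pairs $(l_1,l_2)$ so obtained as $(i,j)$ ranges over the positions of the nonzero entries of $A$. Then $A=A_1\otimes A_2$ for some $A_1\in\{0,1\}^{n_1\times n_1}$, $A_2\in\{0,1\}^{n_2\times n_2}$ if and only if there exist subsets $S_1,S_2\subset\mathbb{N}$ such that $S=S_1\times S_2$.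
   Context: Kronecker products of binary matrices use Boolean arithmetic ($1+1=1$, products as usual). *)

From mathcomp Require Import all_boot all_algebra.
Set Implicit Arguments. Unset Strict Implicit. Unset Printing Implicit Defensive.

(* Kronecker product of binary matrices with Boolean arithmetic (0-based
   indices): (A1 (x) A2)[i1*n2 + i2, j1*n2 + j2] = A1[i1,j1] * A2[i2,j2],
   the Boolean product being conjunction. *)
Definition kronb (n1 n2 n : nat) (A1 : 'M[bool]_n1) (A2 : 'M[bool]_n2)
  : 'M[bool]_n :=
  \matrix_(i, j) [exists i1 : 'I_n1, exists i2 : 'I_n2,
                  exists j1 : 'I_n1, exists j2 : 'I_n2,
      [&& (i : nat) == i1 * n2 + i2, (j : nat) == j1 * n2 + j2,
          A1 i1 j1 & A2 i2 j2]].

(* The set S of pairs (l1, l2) built from the nonzero entries (i, j) of A,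
   with the paper's 1-based conventions: for 0-based ordinal i (= paper i - 1),
   ~i1 = i %/ n2, ~i2 = i %% n2, i_k = ~i_k + 1, and
   l1 = (j1 - 1) n1 + i1 = ~j1 * n1 + ~i1 + 1,
   l2 = (j2 - 1) n2 + i2 = ~j2 * n2 + ~i2 + 1. *)
Definition Sset (n n1 n2 : nat) (A : 'M[bool]_n) (p : nat * nat) : Prop :=
  exists (i j : 'I_n), A i j /\
    p = ((j %/ n2) * n1 + (i %/ n2) + 1, (j %% n2) * n2 + (i %% n2) + 1)%N.

From mathcomp Require Import all_boot all_algebra.
From mathcomp Require Import zify.

(* Split each index of 'I_n = 'I_(n1 * n2) into its block part (quotient by
   n2) and its in-block part (remainder).  This reorganises the support of A
   as a relation between the block positions (i1, j1) and the in-block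
   positions (i2, j2); A is a Kronecker product exactly when that relation is
   a rectangle P x Q.  The pair (l1, l2) of the statement is an injective
   encoding of ((i1, j1), (i2, j2)), and the image of a relation under a pair
   of injections is a rectangle iff the relation is one. *)

Set Implicit Arguments.
Unset Strict Implicit.
Unset Printing Implicit Defensive.

Section Rectangles.
Variables (X Y : Type) (R : X -> Y -> Prop).

Lemma rectangle_complete (P : X -> Prop) (Q : Y -> Prop) :
    (forall x y, R x y <-> P x /\ Q y) ->
  forall x x' y y', R x y' -> R x' y -> R x y.
Proof. by move=> RPQ x x' y y' /RPQ[Px _] /RPQ[_ Qy]; apply/RPQ. Qed.

Lemma rectangle_image (T1 T2 : Type) (f : X -> T1) (g : Y -> T2)
    (S : T1 -> T2 -> Prop) :
    injective f -> injective g ->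
    (forall t1 t2, S t1 t2 <-> exists x y, [/\ R x y, t1 = f x & t2 = g y]) ->
  (exists P Q, forall x y, R x y <-> P x /\ Q y) <->
  (exists S1 S2, forall t1 t2, S t1 t2 <-> S1 t1 /\ S2 t2).
Proof.
move=> f_inj g_inj SE; split=> [[P [Q RPQ]] | [S1 [S2 SS]]].
  exists (fun t1 => exists2 x, P x & t1 = f x).
  exists (fun t2 => exists2 y, Q y & t2 = g y) => t1 t2; split.
    by case/SE=> x [y [/RPQ[Px Qy] -> ->]]; split; [exists x | exists y].
  by case=> -[x Px ->] [y Qy ->]; apply/SE; exists x, y; split=> //; apply/RPQ.
exists (fun x => S1 (f x)), (fun y => S2 (g y)) => x y; split.
  by move=> Rxy; apply/SS/SE; exists x, y.
by case/SS/SE=> x' [y' [Rxy' /f_inj -> /g_inj ->]].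
Qed.

End Rectangles.

Lemma divnMDord m j (i : 'I_m) : (j * m + i) %/ m = j.
Proof.
by rewrite divnMDl ?divn_small ?addn0 // (leq_ltn_trans (leq0n i) (ltn_ord i)).
Qed.

Lemma modnMDord m j (i : 'I_m) : (j * m + i) %% m = i.
Proof. by rewrite modnMDl modn_small. Qed.

Definition lin_index m (i j : 'I_m) : nat := j * m + i + 1.

Lemma lin_index_inj m : injective (fun x : 'I_m * 'I_m => lin_index x.1 x.2).
Proof.
move=> [i j] [i' j'] /= /eqP; rewrite /lin_index eqn_add2r => /eqP eq_ij.
have ei : i = i' by apply/val_inj; rewrite /= -(modnMDord j) eq_ij modnMDord.
have ej : j = j' by apply/val_inj; rewrite /= -(divnMDord j i) eq_ij divnMDord.
by rewrite ei ej.
Qed.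

Section KroneckerIndex.
Variables n1 n2 n : nat.
Hypotheses (n2_gt0 : 0 < n2) (n1n2 : n1 * n2 = n).

Fact kron_idx_subproof (a : 'I_n1) (b : 'I_n2) : a * n2 + b < n.
Proof. by rewrite -n1n2; have := ltn_ord a; have := ltn_ord b; nia. Qed.

Definition kron_idx (a : 'I_n1) (b : 'I_n2) : 'I_n :=
  Ordinal (kron_idx_subproof a b).

Fact kron_idx1_subproof (i : 'I_n) : i %/ n2 < n1.
Proof. by rewrite ltn_divLR // n1n2. Qed.

Fact kron_idx2_subproof (i : 'I_n) : i %% n2 < n2.
Proof. by rewrite ltn_pmod. Qed.

Definition kron_idx1 (i : 'I_n) : 'I_n1 := Ordinal (kron_idx1_subproof i).
Definition kron_idx2 (i : 'I_n) : 'I_n2 := Ordinal (kron_idx2_subproof i).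

Lemma kron_idxK1 a b : kron_idx1 (kron_idx a b) = a.
Proof. exact/val_inj/divnMDord. Qed.

Lemma kron_idxK2 a b : kron_idx2 (kron_idx a b) = b.
Proof. exact/val_inj/modnMDord. Qed.

Lemma kron_idx_split i : kron_idx (kron_idx1 i) (kron_idx2 i) = i.
Proof. by apply/val_inj; rewrite /= -divn_eq. Qed.

Lemma kronbE (A1 : 'M[bool]_n1) (A2 : 'M[bool]_n2) i j :
  kronb n A1 A2 i j =
  A1 (kron_idx1 i) (kron_idx1 j) && A2 (kron_idx2 i) (kron_idx2 j).
Proof.
rewrite mxE; apply/existsP/andP=> [[i1] | [A1ij A2ij]].
  case/existsP=> i2 /existsP[j1 /existsP[j2]] /and4P[/eqP ei /eqP ej A1ij A2ij].
  have -> : i = kron_idx i1 i2 by apply: val_inj.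
  have -> : j = kron_idx j1 j2 by apply: val_inj.
  by rewrite !kron_idxK1 !kron_idxK2.
exists (kron_idx1 i); apply/existsP; exists (kron_idx2 i).
apply/existsP; exists (kron_idx1 j); apply/existsP; exists (kron_idx2 j).
by rewrite A1ij A2ij /= -!divn_eq !eqxx.
Qed.

Definition kron_view (A : 'M[bool]_n) (x : 'I_n1 * 'I_n1) (y : 'I_n2 * 'I_n2)
  : bool := A (kron_idx x.1 y.1) (kron_idx x.2 y.2).

Lemma kron_view_kronb A1 A2 x y :
  kron_view (kronb n A1 A2) x y = A1 x.1 x.2 && A2 y.1 y.2.
Proof. by rewrite /kron_view kronbE !kron_idxK1 !kron_idxK2. Qed.

Lemma kronb_rectangle (A : 'M[bool]_n) :
  (exists (A1 : 'M[bool]_n1) (A2 : 'M[bool]_n2), A = kronb n A1 A2) <->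
  (exists P Q, forall x y, kron_view A x y <-> P x /\ Q y).
Proof.
split=> [[A1 [A2 ->]] | [P [Q rectA]]].
  exists (fun x => A1 x.1 x.2), (fun y => A2 y.1 y.2) => x y.
  by rewrite kron_view_kronb; split=> /andP.
exists (\matrix_(i1, j1) [exists y, kron_view A (i1, j1) y])%R.
exists (\matrix_(i2, j2) [exists x, kron_view A x (i2, j2)])%R.
apply/matrixP=> i j; rewrite kronbE !mxE.
rewrite -{1}(kron_idx_split i) -{1}(kron_idx_split j).
apply/idP/andP=> [Aij | [/existsP[y' Axy'] /existsP[x' Ax'y]]].
  by split; apply/existsP;
    [exists (kron_idx2 i, kron_idx2 j) | exists (kron_idx1 i, kron_idx1 j)].
exact: rectangle_complete rectA _ _ _ _ Axy' Ax'y.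
Qed.

Lemma SsetE (A : 'M[bool]_n) l1 l2 :
  Sset n1 n2 A (l1, l2) <->
  exists x y, [/\ kron_view A x y, l1 = lin_index x.1 x.2
                                 & l2 = lin_index y.1 y.2].
Proof.
split=> [[i [j [Aij [-> ->]]]] | [[i1 j1] [[i2 j2] [Axy -> ->]]]].
  exists (kron_idx1 i, kron_idx1 j), (kron_idx2 i, kron_idx2 j).
  by rewrite /kron_view !kron_idx_split.
exists (kron_idx i1 i2), (kron_idx j1 j2); split=> //.
by rewrite /lin_index /= !divnMDord !modnMDord.
Qed.

End KroneckerIndex.

Theorem lemma4 (n n1 n2 : nat) (A : 'M[bool]_n) :
  (0 < n1)%N -> (0 < n2)%N -> (n1 * n2)%N = n ->
  (exists (A1 : 'M[bool]_n1) (A2 : 'M[bool]_n2), A = kronb n A1 A2) <->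
  (exists S1 S2 : nat -> Prop,
      forall l1 l2 : nat, Sset n1 n2 A (l1, l2) <-> (S1 l1 /\ S2 l2)).
Proof.
move=> _ n2_gt0 n1n2.
apply: iff_trans (kronb_rectangle n2_gt0 n1n2 A) _.
apply: (rectangle_image (S := fun l1 l2 => Sset n1 n2 A (l1, l2)))
  (@lin_index_inj n1) (@lin_index_inj n2) _.
exact: SsetE.
Qed.
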